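(* Let $L>0$. Let $\Gamma_L$ be the loop of length $L$ with a distinguished point $v$ (made into a vertex of degree two), and let $\Gamma_I$ be the interval $[0,L]$ with distinguished vertex $m$ at its midpoint $L/2$ (made into a vertex of degree two; the endpoints are degree-one vertices with Neumann condition). Then the $M$-functions $M^{\Gamma_L}_v$ and $M^{\Gamma_I}_m$ coincide, although $\Gamma_L$ and $\Gamma_I$ are not isospectral. Consequently, for every $c>0$, if $\Gamma_c$ is an interval of length $c$ attached by one endpoint at $v$ (resp. at $m$), the graphs $\Gamma_L\cup\Gamma_c$ and $\Gamma_I\cup\Gamma_c$ have the same eigenfrequencies apart from those whose eigenfunctions vanish at the attachment vertex; for $L=4$ their secular equations are $\left(-1+e^{4ik}\right)F_c(k)$ and $\left(1+e^{4ik}\right)F_c(k)$ respectively with the common factor $F_c(k)=-e^{2ick}+3e^{2i(c+2)k}+e^{4ik}-3$.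
   Context: Titchmarsh–Weil $M$-function: for a compact metric graph $\Gamma$ with a distinguished boundary vertex $v$ (all other vertices interior), and $k$ outside a discrete set, let $u$ satisfy $-u''=k^2u$ on each edge, be continuous at every vertex, satisfy the Kirchhoff condition (vanishing sum of outward normal derivatives) at every interior vertex, and have $u(v)\ne0$. Then $M^\Gamma_v(k)$ is defined by $M^\Gamma_v(k)u(v)=u'(v)$, where $u'(v)$ is the sum of outward normal derivatives of $u$ at $v$. Standard (Neumann–Kirchhoff) vertex conditions are used throughout. *)

From Stdlib Require Import Reals List Arith.
From Coquelicot Require Import Coquelicot.

(* A compact metric graph: vertices 0..nV-1, edges 0..nE-1.  Edge e is
   identified with the interval [0, elen e]; the point 0 sits at vertex
   esrc e and the point elen e at vertex etgt e (esrc e = etgt e is a loop). *)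
Record mgraph := MGraph {
  nV : nat; nE : nat;
  elen : nat -> R; esrc : nat -> nat; etgt : nat -> nat }.

(* A function on the graph: one C-valued function per edge, together with
   its derivative (the pair (u, du)). *)
Definition gfun := ((nat -> R -> C) * (nat -> R -> C))%type.

(* -u'' = z u on every edge (the edge solution is taken on all of R; any
   solution on [0, elen e] extends uniquely, so this is no restriction). *)
Definition solves (G : mgraph) (z : C) (f : gfun) : Prop :=
  forall e, (e < nE G)%nat -> forall x : R,
    is_derive (fst f e) x (snd f e x) /\
    is_derive (snd f e) x (Copp (Cmult z (fst f e x))).

Definition vertex_value (G : mgraph) (f : gfun) (w : nat) (a : C) : Prop :=
  forall e, (e < nE G)%nat ->
    (esrc G e = w -> fst f e 0%R = a) /\ (etgt G e = w -> fst f e (elen G e) = a).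

Definition continuous_at_vertex (G : mgraph) (f : gfun) (w : nat) : Prop :=
  exists a, vertex_value G f w a.

Definition Csum (l : list C) : C := fold_right Cplus (RtoC 0) l.

(* Sum at w of the normal derivatives, taken in the direction pointing from
   w into the edges (a loop at w contributes twice). *)
Definition dsum (G : mgraph) (f : gfun) (w : nat) : C :=
  Csum (map (fun e =>
          Cplus (if Nat.eqb (esrc G e) w then snd f e 0%R else RtoC 0)
                (if Nat.eqb (etgt G e) w then Copp (snd f e (elen G e)) else RtoC 0))
        (seq 0 (nE G))).

Definition kirchhoff_at (G : mgraph) (f : gfun) (w : nat) : Prop :=
  continuous_at_vertex G f w /\ dsum G f w = RtoC 0.

Definition gzero (G : mgraph) (f : gfun) : Prop :=
  forall e, (e < nE G)%nat -> forall x, (0 <= x <= elen G e)%R -> fst f e x = RtoC 0.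

(* f is an eigenfunction (possibly zero) of the standard Laplacian for the
   eigenvalue z, i.e. -u'' = z u with standard conditions at all vertices. *)
Definition eigen_sol (G : mgraph) (z : C) (f : gfun) : Prop :=
  solves G z f /\ forall w, (w < nV G)%nat -> kirchhoff_at G f w.

Definition eigenfreq (G : mgraph) (k : R) : Prop :=
  exists f, eigen_sol G (RtoC (k * k)) f /\ ~ gzero G f.

Definition eigenfreq_nonvanishing_at (G : mgraph) (k : R) (w : nat) : Prop :=
  exists f a, eigen_sol G (RtoC (k * k)) f /\ vertex_value G f w a /\ a <> RtoC 0.

Definition lin_indep (G : mgraph) (fs : list gfun) : Prop :=
  forall cs : list C, length cs = length fs ->
    (forall e, (e < nE G)%nat -> forall x, (0 <= x <= elen G e)%R ->
       Csum (map (fun p => Cmult (fst p) (fst (snd p) e x)) (combine cs fs)) = RtoC 0) ->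
    List.Forall (fun c => c = RtoC 0) cs.

Definition mult_ge (G : mgraph) (lam : R) (n : nat) : Prop :=
  exists fs : list gfun, length fs = n /\
    List.Forall (eigen_sol G (RtoC lam)) fs /\ lin_indep G fs.

Definition isospectral (G1 G2 : mgraph) : Prop :=
  forall (lam : R) (n : nat), mult_ge G1 lam n <-> mult_ge G2 lam n.

(* Titchmarsh-Weil M-function with boundary vertex v, as a relation:
   Mfun G v k m  <->  M^G_v(k) is defined and equals m. *)
Definition admissible (G : mgraph) (v : nat) (k : C) (f : gfun) : Prop :=
  solves G (Cmult k k) f /\
  (forall w, (w < nV G)%nat -> continuous_at_vertex G f w) /\
  (forall w, (w < nV G)%nat -> w <> v -> dsum G f w = RtoC 0).

Definition Mfun (G : mgraph) (v : nat) (k m : C) : Prop :=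
  (exists f a, admissible G v k f /\ vertex_value G f v a /\ a <> RtoC 0) /\
  (forall f a, admissible G v k f -> vertex_value G f v a -> a <> RtoC 0 ->
     dsum G f v = Cmult m a).

(* The loop of length L with its point v = vertex 0. *)
Definition loop_graph (L : R) : mgraph :=
  MGraph 1 1 (fun _ => L) (fun _ => 0%nat) (fun _ => 0%nat).

(* The interval [0, L] with midpoint m = vertex 0 made into a vertex; the
   two halves (edges 0 and 1, length L/2) go from m to the endpoints
   (vertices 1 and 2). *)
Definition interval_graph (L : R) : mgraph :=
  MGraph 3 2 (fun _ => (L / 2)%R) (fun _ => 0%nat) (fun e => S e).

Definition attach (G : mgraph) (w : nat) (c : R) : mgraph :=
  MGraph (S (nV G)) (S (nE G))
    (fun e => if Nat.eqb e (nE G) then c else elen G e)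
    (fun e => if Nat.eqb e (nE G) then w else esrc G e)
    (fun e => if Nat.eqb e (nE G) then nV G else etgt G e).

Definition cexpi (t : R) : C := (cos t, sin t).

Definition Fc (c k : R) : C :=
  Cplus (Cplus (Cplus (Copp (cexpi (2 * c * k)))
                      (Cmult (RtoC 3) (cexpi (2 * (c + 2) * k))))
               (cexpi (4 * k)))
        (Copp (RtoC 3)).

(* Everything rests on the ODE -u'' = z u on each edge, for which we prove
   uniqueness of the Cauchy problem (an energy/Gronwall estimate) and, for
   real frequencies k, the explicit form A cos kx + B sin kx of solutions.
   - The M-functions coincide because symmetrizing a loop function about the
     antipode of v, and conversely averaging the two halves of an interval
     function, preserve the equation, the value at the distinguished vertex
     and the total flux there.  The same maps, extended by the identity on a
     pendant edge, give the equality of non-vanishing eigenfrequencies.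
   - k = pi/L is an eigenfrequency of the interval (an odd eigenfunction) but
     not of the loop, so the graphs are not isospectral.
   - For L = 4, the eigenfunctions with a pendant edge are computed explicitly:
     the vertex conditions become a 3 x 3 real linear system whose determinant
     is sin 2k (loop) or cos 2k (interval) times a common factor, which is
     F_c(k) up to a unit; explicit eigenfunctions realize the zeros. *)

From Stdlib Require Import Reals List Arith.
From Coquelicot Require Import Coquelicot.
From Stdlib Require Import Lra Lia.
Open Scope R_scope.

Ltac C_ext := apply injective_projections; simpl.

(** * Derivatives of complex-valued functions of a real variable *)

Lemma is_derive_eq_val {K : AbsRing} {V : NormedModule K} (f : K -> V) x l l' :
  is_derive f x l -> l = l' -> is_derive f x l'.
Proof. intros H ->; exact H. Qed.

Lemma is_derive_C (f : R -> C) x l :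
  is_derive f x l <->
  is_derive (fun t => fst (f t)) x (fst l) /\ is_derive (fun t => snd (f t)) x (snd l).
Proof.
  split.
  - intros H. unfold is_derive in *. split.
    + apply (filterdiff_ext_lin _ _ _
        (@filterdiff_comp R_AbsRing R_NormedModule
           (prod_NormedModule R_AbsRing R_NormedModule R_NormedModule) R_NormedModule
           (locally x) _ f fst _ fst H (filterdiff_linear _ is_linear_fst))).
      reflexivity.
    + apply (filterdiff_ext_lin _ _ _
        (@filterdiff_comp R_AbsRing R_NormedModule
           (prod_NormedModule R_AbsRing R_NormedModule R_NormedModule) R_NormedModule
           (locally x) _ f snd _ snd H (filterdiff_linear _ is_linear_snd))).
      reflexivity.
  - intros [H1 H2].
    pose proof (is_derive_scal_l (V := C_R_NormedModule) _ x _ (1, 0) H1) as D1.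
    pose proof (is_derive_scal_l (V := C_R_NormedModule) _ x _ (0, 1) H2) as D2.
    pose proof (is_derive_plus _ _ _ _ _ D1 D2) as D.
    eapply is_derive_ext; [|eapply is_derive_eq_val; [exact D|]].
    + intros t. simpl. unfold plus, scal; simpl. unfold prod_plus, prod_scal; simpl.
      unfold plus, scal, mult; simpl. C_ext; unfold mult; simpl; ring.
    + simpl. unfold plus, scal; simpl. unfold prod_plus, prod_scal; simpl.
      unfold plus, scal, mult; simpl. C_ext; unfold mult; simpl; ring.
Qed.

Lemma is_derive_RtoC (f : R -> R) x a :
  is_derive f x a -> is_derive (fun t => RtoC (f t)) x (RtoC a).
Proof. intros H. apply is_derive_C; simpl. split; [exact H | auto_derive; auto]. Qed.

Lemma is_derive_Clin (f g : R -> C) (al be : C) x a b :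
  is_derive f x a -> is_derive g x b ->
  is_derive (fun t => Cplus (Cmult al (f t)) (Cmult be (g t))) x
            (Cplus (Cmult al a) (Cmult be b)).
Proof.
  intros [F1 F2]%is_derive_C [G1 G2]%is_derive_C. destruct al as [p q], be as [r s].
  apply is_derive_C; simpl; split;
    repeat match goal with
    | |- is_derive (fun t => @?F t + @?G t) _ _ => apply (is_derive_plus F G)
    | |- is_derive (fun t => @?F t - @?G t) _ _ => apply (is_derive_minus F G)
    | |- is_derive (fun t => ?k * @?F t) _ _ => apply (is_derive_scal F)
    end; assumption.
Qed.

Lemma is_derive_reflect (f df : R -> C) a x :
  (forall y, is_derive f y (df y)) ->
  is_derive (fun t => f (a - t)) x (Copp (df (a - x))).
Proof.
  intros H. destruct (proj1 (is_derive_C _ _ _) (H (a - x))) as [F1 F2].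
  apply is_derive_C; simpl; split.
  - eapply is_derive_eq_val.
    + apply (is_derive_comp (fun y => fst (f y)) (fun t => a - t)); [exact F1|].
      auto_derive; [exact I | reflexivity].
    + change (- (1) * fst (df (a - x)) = - fst (df (a - x))); ring.
  - eapply is_derive_eq_val.
    + apply (is_derive_comp (fun y => snd (f y)) (fun t => a - t)); [exact F2|].
      auto_derive; [exact I | reflexivity].
    + change (- (1) * snd (df (a - x)) = - snd (df (a - x))); ring.
Qed.

(** * The equation -u'' = z u on the real line *)

Definition sol (z : C) (u du : R -> C) : Prop :=
  forall x, is_derive u x (du x) /\ is_derive du x (Copp (Cmult z (u x))).

Lemma gronwall_zero (E E' : R -> R) (K x0 : R) :
  (forall t, is_derive E t (E' t)) -> (forall t, 0 <= E t) ->
  (forall t, Rabs (E' t) <= K * E t) -> E x0 = 0 -> forall t, E t = 0.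
Proof.
  intros DE Epos Ebound E0 t.
  (* With the weight exp (s y), the mean value theorem bounds E t by its value at x0. *)
  assert (weighted : forall s, (forall y, (E' y + s * E y) * (t - x0) <= 0) -> E t = 0).
  { intros s Hs. set (g := fun y => E y * exp (s * y)).
    assert (Dg : forall y, is_derive g y ((E' y + s * E y) * exp (s * y))).
    { intros y. apply is_derive_Reals. unfold g.
      replace ((E' y + s * E y) * exp (s * y))
        with (E' y * exp (s * y) + E y * (exp (s * y) * (s * 1))) by ring.
      apply (derivable_pt_lim_mult E (fun y => exp (s * y))); [apply is_derive_Reals, DE|].
      apply is_derive_Reals. auto_derive; [exact I | ring]. }
    destruct (MVT_cor4 g _ x0 (Rabs (t - x0)) (fun y _ => Dg y) t (Rle_refl _))
      as [y [Hy _]].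
    unfold g in Hy. rewrite E0 in Hy.
    pose proof (Hs y). pose proof (exp_pos (s * y)). pose proof (exp_pos (s * t)).
    pose proof (Epos t). nra. }
  destruct (Rle_or_lt x0 t) as [Ht | Ht].
  - apply (weighted (- K)). intros y. pose proof (Rle_abs (E' y)). pose proof (Ebound y).
    nra.
  - apply (weighted K). intros y. pose proof (proj1 (Rabs_le_between _ _) (Ebound y)). nra.
Qed.

(* The derivative of the energy |u|^2 + |u'|^2 of a solution, written in real
   coordinates u = a + ib, u' = c + id, z = zr + i zi, is controlled by the energy. *)
Lemma energy_bound zr zi a b c d :
  Rabs (2*a*c + 2*b*d - 2*c*(zr*a - zi*b) - 2*d*(zr*b + zi*a))
  <= (3 + zr*zr + zi*zi) * (a*a + b*b + c*c + d*d).
Proof.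
  assert (0 <= (zr*zr + zi*zi) * (c*c + d*d)) by (apply Rmult_le_pos; nra).
  apply Rabs_le; split.
  - pose proof (pow2_ge_0 (a + c)). pose proof (pow2_ge_0 (b + d)).
    pose proof (pow2_ge_0 (c - zr*a)). pose proof (pow2_ge_0 (c + zi*b)).
    pose proof (pow2_ge_0 (d - zr*b)). pose proof (pow2_ge_0 (d - zi*a)). nra.
  - pose proof (pow2_ge_0 (a - c)). pose proof (pow2_ge_0 (b - d)).
    pose proof (pow2_ge_0 (c + zr*a)). pose proof (pow2_ge_0 (c - zi*b)).
    pose proof (pow2_ge_0 (d + zr*b)). pose proof (pow2_ge_0 (d + zi*a)). nra.
Qed.

Lemma derivable_pt_lim_square (f : R -> R) x l : derivable_pt_lim f x l ->
  derivable_pt_lim (fun t => f t * f t) x (2 * f x * l).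
Proof.
  intros H. replace (2 * f x * l) with (l * f x + f x * l) by ring.
  exact (derivable_pt_lim_mult f f x l l H H).
Qed.

Lemma sol_zero_data z u du x0 : sol z u du -> u x0 = RtoC 0 -> du x0 = RtoC 0 ->
  forall x, u x = RtoC 0 /\ du x = RtoC 0.
Proof.
  intros Hs U0 DU0.
  set (a := fun t => fst (u t)). set (b := fun t => snd (u t)).
  set (c := fun t => fst (du t)). set (d := fun t => snd (du t)).
  destruct z as [zr zi].
  assert (Da : forall t, derivable_pt_lim a t (c t))
    by (intros t; apply is_derive_Reals, (proj1 (is_derive_C _ _ _) (proj1 (Hs t)))).
  assert (Db : forall t, derivable_pt_lim b t (d t))
    by (intros t; apply is_derive_Reals, (proj1 (is_derive_C _ _ _) (proj1 (Hs t)))).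
  assert (Dc : forall t, derivable_pt_lim c t (- (zr * a t - zi * b t)))
    by (intros t; apply is_derive_Reals, (proj1 (is_derive_C _ _ _) (proj2 (Hs t)))).
  assert (Dd : forall t, derivable_pt_lim d t (- (zr * b t + zi * a t)))
    by (intros t; apply is_derive_Reals, (proj1 (is_derive_C _ _ _) (proj2 (Hs t)))).
  set (E := fun t => a t * a t + b t * b t + c t * c t + d t * d t).
  assert (Ez : forall t, E t = 0).
  { apply (gronwall_zero E (fun t => 2 * a t * c t + 2 * b t * d t
             - 2 * c t * (zr * a t - zi * b t) - 2 * d t * (zr * b t + zi * a t))
             (3 + zr * zr + zi * zi) x0).
    - intros t. apply is_derive_Reals. unfold E.
      replace (2 * a t * c t + 2 * b t * d t - 2 * c t * (zr * a t - zi * b t)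
               - 2 * d t * (zr * b t + zi * a t))
        with (2 * a t * c t + 2 * b t * d t + 2 * c t * (- (zr * a t - zi * b t))
              + 2 * d t * (- (zr * b t + zi * a t))) by ring.
      repeat apply derivable_pt_lim_plus; apply derivable_pt_lim_square; auto.
    - intros t. unfold E. nra.
    - intros t. apply energy_bound.
    - unfold E, a, b, c, d. rewrite U0, DU0. simpl. ring. }
  intros t. pose proof (Ez t) as Et. unfold E in Et.
  assert (a t = 0 /\ b t = 0 /\ c t = 0 /\ d t = 0) as (Ha & Hb & Hc & Hd) by nra.
  unfold a, b, c, d in *. split; C_ext; assumption.
Qed.

Lemma sol_lin z u1 du1 u2 du2 al be :
  sol z u1 du1 -> sol z u2 du2 ->
  sol z (fun t => Cplus (Cmult al (u1 t)) (Cmult be (u2 t)))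
        (fun t => Cplus (Cmult al (du1 t)) (Cmult be (du2 t))).
Proof.
  intros H1 H2 x. split.
  - apply is_derive_Clin; [apply H1 | apply H2].
  - eapply is_derive_eq_val; [apply is_derive_Clin; [apply H1 | apply H2]|].
    change (@eq C (Cplus (Cmult al (Copp (Cmult z (u1 x)))) (Cmult be (Copp (Cmult z (u2 x)))))
      (Copp (Cmult z (Cplus (Cmult al (u1 x)) (Cmult be (u2 x)))))). ring.
Qed.

Lemma sol_reflect z u du a :
  sol z u du -> sol z (fun t => u (a - t)) (fun t => Copp (du (a - t))).
Proof.
  intros H x. split.
  - apply is_derive_reflect. intros y; apply H.
  - assert (D : is_derive (fun t => du (a - t)) x (Copp (Copp (Cmult z (u (a - x))))))
      by (apply (is_derive_reflect du (fun t => Copp (Cmult z (u t)))); intros y; apply H).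
    eapply is_derive_ext; [|eapply is_derive_eq_val;
      [exact (is_derive_Clin _ _ (RtoC (-1)) (RtoC 0) x _ _ D D)|]];
      [intros t; simpl|]; C_ext; ring.
Qed.

Lemma sol_unique z u1 du1 u2 du2 x0 :
  sol z u1 du1 -> sol z u2 du2 -> u1 x0 = u2 x0 -> du1 x0 = du2 x0 ->
  forall x, u1 x = u2 x /\ du1 x = du2 x.
Proof.
  intros H1 H2 E1 E2 x.
  destruct (sol_zero_data _ _ _ x0 (sol_lin _ _ _ _ _ (RtoC 1) (RtoC (-1)) H1 H2))
    with (x := x) as [A B]; [rewrite E1; ring | rewrite E2; ring |].
  split.
  - transitivity (Cplus (Cplus (Cmult (RtoC 1) (u1 x)) (Cmult (RtoC (-1)) (u2 x))) (u2 x));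
      [ring | rewrite A; ring].
  - transitivity (Cplus (Cplus (Cmult (RtoC 1) (du1 x)) (Cmult (RtoC (-1)) (du2 x))) (du2 x));
      [ring | rewrite B; ring].
Qed.

Definition cs (k x1 : R) (A B : C) (x : R) : C :=
  Cplus (Cmult A (RtoC (cos (k * (x - x1))))) (Cmult B (RtoC (sin (k * (x - x1))))).
Definition dcs (k x1 : R) (A B : C) (x : R) : C :=
  Cplus (Cmult A (RtoC (- k * sin (k * (x - x1))))) (Cmult B (RtoC (k * cos (k * (x - x1))))).

Lemma cs_eval k x1 A B x : cs k x1 A B x =
  (fst A * cos (k * (x - x1)) + fst B * sin (k * (x - x1)),
   snd A * cos (k * (x - x1)) + snd B * sin (k * (x - x1))).
Proof. destruct A, B; unfold cs; C_ext; ring. Qed.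

Lemma dcs_eval k x1 A B x : dcs k x1 A B x =
  (fst A * (- k * sin (k * (x - x1))) + fst B * (k * cos (k * (x - x1))),
   snd A * (- k * sin (k * (x - x1))) + snd B * (k * cos (k * (x - x1)))).
Proof. destruct A, B; unfold dcs; C_ext; ring. Qed.

Lemma sol_cs k x1 A B : sol (RtoC (k * k)) (cs k x1 A B) (dcs k x1 A B).
Proof.
  intros x. unfold cs, dcs. split.
  - apply is_derive_Clin; apply is_derive_RtoC; auto_derive; auto; unfold Rminus; ring.
  - eapply is_derive_eq_val;
      [apply is_derive_Clin; apply is_derive_RtoC; auto_derive; auto|].
    destruct A, B. C_ext; unfold Rminus; ring.
Qed.

Lemma sol_repr k x1 u du : k <> 0 -> sol (RtoC (k * k)) u du ->
  forall x, u x = cs k x1 (u x1) (Cmult (du x1) (RtoC (/ k))) x /\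
            du x = dcs k x1 (u x1) (Cmult (du x1) (RtoC (/ k))) x.
Proof.
  intros Hk Hs. apply (sol_unique _ _ _ _ _ x1 Hs (sol_cs _ _ _ _));
    unfold cs, dcs; rewrite Rminus_eq_0, Rmult_0_r, cos_0, sin_0.
  - C_ext; ring.
  - destruct (du x1). C_ext; field; auto.
Qed.

Lemma sol_repr_neumann k x1 u du : k <> 0 -> sol (RtoC (k * k)) u du -> du x1 = RtoC 0 ->
  forall x, u x = cs k x1 (u x1) (RtoC 0) x /\ du x = dcs k x1 (u x1) (RtoC 0) x.
Proof.
  intros Hk Hs H0 x. destruct (sol_repr k x1 u du Hk Hs x) as [R1 R2].
  rewrite H0 in R1, R2. rewrite R1, R2. split; f_equal; ring.
Qed.

(** * Symmetrization: loop functions versus pairs of half-interval functions *)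

(* The loop of length L is [0, L] with both ends glued at v; the interval is
   two copies of [0, L/2] glued at the midpoint m, with Neumann ends at L/2.
   A loop function u is transferred by symmetrizing it about L/2, a pair of
   half-interval functions (g0, g1) by averaging them. *)
Definition half : C := RtoC (/ 2).
Definition symw (L : R) (u : R -> C) (t : R) : C :=
  Cplus (Cmult half (u t)) (Cmult half (u (L - t))).
Definition symdw (L : R) (du : R -> C) (t : R) : C :=
  Cplus (Cmult half (du t)) (Cmult half (Copp (du (L - t)))).
Definition avg (g0 g1 : R -> C) (t : R) : C :=
  Cplus (Cmult half (g0 t)) (Cmult half (g1 t)).

Lemma symmetrize_loop_solution z L u du a : sol z u du -> u 0 = a -> u L = a ->
  sol z (symw L u) (symdw L du) /\ symw L u 0 = a /\ symdw L du (L / 2) = RtoC 0 /\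
  Cplus (symdw L du 0) (symdw L du 0) = Cplus (du 0) (Copp (du L)).
Proof.
  intros H H0 HL. split; [|split; [|split]].
  - exact (sol_lin z u du _ _ half half H (sol_reflect z u du L H)).
  - unfold symw. rewrite Rminus_0_r, H0, HL. destruct a; C_ext; field.
  - unfold symdw. replace (L - L / 2) with (L / 2) by field. destruct (du (L / 2)).
    C_ext; field.
  - unfold symdw. rewrite Rminus_0_r. destruct (du 0), (du L). C_ext; field.
Qed.

Lemma neumann_midpoint_symmetric z L g dg : sol z g dg -> dg (L / 2) = RtoC 0 ->
  forall t, g (L - t) = g t /\ Copp (dg (L - t)) = dg t.
Proof.
  intros H H2 t.
  apply (sol_unique z _ _ _ _ (L / 2) (sol_reflect z g dg L H) H).
  - f_equal; field.
  - replace (L - L / 2) with (L / 2) by field. rewrite H2. C_ext; ring.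
Qed.

Lemma average_half_solutions z L g0 dg0 g1 dg1 a : sol z g0 dg0 -> sol z g1 dg1 ->
  g0 0 = a -> g1 0 = a -> dg0 (L / 2) = RtoC 0 -> dg1 (L / 2) = RtoC 0 ->
  sol z (avg g0 g1) (avg dg0 dg1) /\ avg g0 g1 0 = a /\ avg g0 g1 L = a /\
  Cplus (avg dg0 dg1 0) (Copp (avg dg0 dg1 L)) = Cplus (dg0 0) (dg1 0).
Proof.
  intros S0 S1 E0 E1 D0 D1.
  destruct (neumann_midpoint_symmetric z L g0 dg0 S0 D0 0) as [R0 R0'].
  destruct (neumann_midpoint_symmetric z L g1 dg1 S1 D1 0) as [R1 R1'].
  rewrite Rminus_0_r in R0, R0', R1, R1'.
  split; [|split; [|split]].
  - apply sol_lin; auto.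
  - unfold avg. rewrite E0, E1. destruct a; C_ext; field.
  - unfold avg. rewrite R0, R1, E0, E1. destruct a; C_ext; field.
  - unfold avg. rewrite <- R0', <- R1'. destruct (dg0 L), (dg1 L). C_ext; field.
Qed.

(** * The four concrete graphs, described edge by edge *)

Ltac finite_cases x H :=
  simpl in H; repeat (destruct x as [|x]; [| try (exfalso; lia)]).

(* A Kirchhoff condition at a vertex of degree one is a Neumann condition. *)
Lemma Copp_eq_0 (d : C) : Copp d = RtoC 0 -> d = RtoC 0.
Proof. intros H. transitivity (Copp (Copp d)); [ring | rewrite H; ring]. Qed.

Lemma eigen_sol_iff_admissible G v k f : (v < nV G)%nat ->
  eigen_sol G (Cmult k k) f <-> admissible G v k f /\ dsum G f v = RtoC 0.
Proof.
  intros Hv. split.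
  - intros [Hs Hk]. split; [split; [exact Hs | split]|].
    + intros w Hw. apply (Hk w Hw).
    + intros w Hw _. apply (Hk w Hw).
    + apply (Hk v Hv).
  - intros [[Hs [Hc Hd]] H0]. split; auto. intros w Hw. split; auto.
    destruct (Nat.eq_dec w v) as [->|]; auto.
Qed.

Lemma loop_admissible_iff L k f a :
  admissible (loop_graph L) 0 k f /\ vertex_value (loop_graph L) f 0 a <->
  sol (Cmult k k) (fst f 0%nat) (snd f 0%nat) /\ fst f 0%nat 0 = a /\ fst f 0%nat L = a.
Proof.
  split.
  - intros [[Hs _] Hv]. destruct (Hv 0%nat) as [V0 VL]; [simpl; lia|]. simpl in *.
    split; [intros x; apply (Hs 0%nat); simpl; lia | auto].
  - intros [Hs [H0 HL]].
    assert (Hv : vertex_value (loop_graph L) f 0 a)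
      by (intros e He; finite_cases e He; simpl; auto).
    split; [split; [|split]|]; auto.
    + intros e He. finite_cases e He. apply Hs.
    + intros w Hw. finite_cases w Hw. exists a. exact Hv.
    + intros w Hw Hne. finite_cases w Hw. contradiction.
Qed.

Lemma loop_dsum L f :
  dsum (loop_graph L) f 0 = Cplus (snd f 0%nat 0) (Copp (snd f 0%nat L)).
Proof. unfold dsum, Csum. simpl. ring. Qed.

Lemma interval_admissible_iff L k f a :
  admissible (interval_graph L) 0 k f /\ vertex_value (interval_graph L) f 0 a <->
  sol (Cmult k k) (fst f 0%nat) (snd f 0%nat) /\ sol (Cmult k k) (fst f 1%nat) (snd f 1%nat) /\
  fst f 0%nat 0 = a /\ fst f 1%nat 0 = a /\
  snd f 0%nat (L / 2) = RtoC 0 /\ snd f 1%nat (L / 2) = RtoC 0.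
Proof.
  split.
  - intros [[Hs [_ Hk]] Hv].
    destruct (Hv 0%nat) as [V0 _]; [simpl; lia|]. destruct (Hv 1%nat) as [V1 _]; [simpl; lia|].
    pose proof (Hk 1%nat ltac:(simpl; lia) ltac:(lia)) as K1.
    pose proof (Hk 2%nat ltac:(simpl; lia) ltac:(lia)) as K2.
    unfold dsum, Csum in K1, K2. simpl in *. ring_simplify in K1. ring_simplify in K2.
    split; [intros x; apply Hs; simpl; lia|].
    split; [intros x; apply Hs; simpl; lia|].
    repeat split; auto.
    + apply Copp_eq_0; assumption.
    + apply Copp_eq_0; assumption.
  - intros [S0 [S1 [E0 [E1 [D0 D1]]]]].
    split; [split; [|split]|].
    + intros e He. finite_cases e He; assumption.
    + intros w Hw. finite_cases w Hw;
        [exists a | exists (fst f 0%nat (L / 2)) | exists (fst f 1%nat (L / 2))];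
        intros e He; finite_cases e He; simpl; split; intros Hq; try discriminate; auto.
    + intros w Hw Hne. finite_cases w Hw; [contradiction| |];
        unfold dsum, Csum; simpl; [rewrite D0 | rewrite D1]; ring.
    + intros e He. finite_cases e He; simpl; split; intros Hq; try discriminate; auto.
Qed.

Lemma interval_dsum L f :
  dsum (interval_graph L) f 0 = Cplus (snd f 0%nat 0) (snd f 1%nat 0).
Proof. unfold dsum, Csum. simpl. ring. Qed.

(* The loop with a pendant edge of length c at v: edge 0 is the loop, edge 1
   the pendant edge, vertex 1 its free (Neumann) end. *)
Lemma loop_pendant_eigen_iff L c z f :
  eigen_sol (attach (loop_graph L) 0 c) z f <->
  sol z (fst f 0%nat) (snd f 0%nat) /\ sol z (fst f 1%nat) (snd f 1%nat) /\
  fst f 0%nat 0 = fst f 1%nat 0 /\ fst f 0%nat L = fst f 1%nat 0 /\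
  snd f 1%nat c = RtoC 0 /\
  Cplus (Cplus (snd f 0%nat 0) (Copp (snd f 0%nat L))) (snd f 1%nat 0) = RtoC 0.
Proof.
  split.
  - intros [Hs Hk].
    destruct (Hk 0%nat ltac:(simpl; lia)) as [[a Hv] K0].
    destruct (Hk 1%nat ltac:(simpl; lia)) as [_ K1].
    destruct (Hv 0%nat ltac:(simpl; lia)) as [V0 VL].
    destruct (Hv 1%nat ltac:(simpl; lia)) as [P0 _].
    unfold dsum, Csum in K0, K1. simpl in *. ring_simplify in K1.
    split; [intros x; apply (Hs 0%nat); simpl; lia|].
    split; [intros x; apply (Hs 1%nat); simpl; lia|].
    rewrite V0, VL, P0 by reflexivity.
    repeat split; auto; [apply Copp_eq_0; assumption | rewrite <- K0; ring].
  - intros [S0 [S1 [E0 [EL [D1 D0]]]]]. split.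
    + intros e He. finite_cases e He; assumption.
    + intros w Hw. finite_cases w Hw; split.
      * exists (fst f 1%nat 0). intros e He. finite_cases e He; simpl;
          split; intros Hq; try discriminate; auto.
      * unfold dsum, Csum. simpl. etransitivity; [|exact D0]; ring.
      * exists (fst f 1%nat c). intros e He. finite_cases e He; simpl;
          split; intros Hq; try discriminate; auto.
      * unfold dsum, Csum. simpl. rewrite D1. ring.
Qed.

Lemma loop_pendant_value_iff L c f a :
  vertex_value (attach (loop_graph L) 0 c) f 0 a <->
  fst f 0%nat 0 = a /\ fst f 0%nat L = a /\ fst f 1%nat 0 = a.
Proof.
  split.
  - intros Hv. destruct (Hv 0%nat ltac:(simpl; lia)) as [V0 VL].
    destruct (Hv 1%nat ltac:(simpl; lia)) as [P0 _]. simpl in *. auto.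
  - intros [V0 [VL P0]] e He. finite_cases e He; simpl;
      split; intros Hq; try discriminate; auto.
Qed.

(* The interval with a pendant edge at its midpoint: edges 0 and 1 are the
   halves, edge 2 the pendant edge. *)
Lemma interval_pendant_eigen_iff L c z f :
  eigen_sol (attach (interval_graph L) 0 c) z f <->
  sol z (fst f 0%nat) (snd f 0%nat) /\ sol z (fst f 1%nat) (snd f 1%nat) /\
  sol z (fst f 2%nat) (snd f 2%nat) /\
  fst f 0%nat 0 = fst f 2%nat 0 /\ fst f 1%nat 0 = fst f 2%nat 0 /\
  snd f 0%nat (L / 2) = RtoC 0 /\ snd f 1%nat (L / 2) = RtoC 0 /\ snd f 2%nat c = RtoC 0 /\
  Cplus (Cplus (snd f 0%nat 0) (snd f 1%nat 0)) (snd f 2%nat 0) = RtoC 0.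
Proof.
  split.
  - intros [Hs Hk].
    destruct (Hk 0%nat ltac:(simpl; lia)) as [[a Hv] K0].
    destruct (Hk 1%nat ltac:(simpl; lia)) as [_ K1].
    destruct (Hk 2%nat ltac:(simpl; lia)) as [_ K2].
    destruct (Hk 3%nat ltac:(simpl; lia)) as [_ K3].
    destruct (Hv 0%nat ltac:(simpl; lia)) as [V0 _].
    destruct (Hv 1%nat ltac:(simpl; lia)) as [V1 _].
    destruct (Hv 2%nat ltac:(simpl; lia)) as [P0 _].
    unfold dsum, Csum in K0, K1, K2, K3. simpl in *.
    ring_simplify in K1. ring_simplify in K2. ring_simplify in K3.
    split; [intros x; apply (Hs 0%nat); simpl; lia|].
    split; [intros x; apply (Hs 1%nat); simpl; lia|].
    split; [intros x; apply (Hs 2%nat); simpl; lia|].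
    rewrite V0, V1, P0 by reflexivity.
    repeat split; auto; try (apply Copp_eq_0; assumption). rewrite <- K0; ring.
  - intros [S0 [S1 [S2 [E0 [E1 [D0 [D1 [D2 DK]]]]]]]]. split.
    + intros e He. finite_cases e He; assumption.
    + intros w Hw. finite_cases w Hw; split;
        try (unfold dsum, Csum; simpl;
             first [ etransitivity; [|exact DK]; ring
                   | rewrite D0; ring | rewrite D1; ring | rewrite D2; ring ]);
        [ exists (fst f 2%nat 0) | exists (fst f 0%nat (L / 2))
        | exists (fst f 1%nat (L / 2)) | exists (fst f 2%nat c) ];
        intros e He; finite_cases e He; simpl; split; intros Hq; try discriminate; auto.
Qed.

Lemma interval_pendant_value_iff L c f a :
  vertex_value (attach (interval_graph L) 0 c) f 0 a <->
  fst f 0%nat 0 = a /\ fst f 1%nat 0 = a /\ fst f 2%nat 0 = a.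
Proof.
  split.
  - intros Hv. destruct (Hv 0%nat ltac:(simpl; lia)) as [V0 _].
    destruct (Hv 1%nat ltac:(simpl; lia)) as [V1 _].
    destruct (Hv 2%nat ltac:(simpl; lia)) as [P0 _]. simpl in *. auto.
  - intros [V0 [V1 P0]] e He. finite_cases e He; simpl;
      split; intros Hq; try discriminate; auto.
Qed.

(** * Equality of the M-functions and of the non-vanishing eigenfrequencies *)

(* The transfer maps.  On the graphs with a pendant edge, the pendant edge is
   edge 1 of the loop graph and edge 2 of the interval graph, and is kept. *)
Definition loop_to_interval (L : R) (f : gfun) : gfun :=
  (fun e => if Nat.eqb e 2 then fst f 1%nat else symw L (fst f 0%nat),
   fun e => if Nat.eqb e 2 then snd f 1%nat else symdw L (snd f 0%nat)).
Definition interval_to_loop (g : gfun) : gfun :=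
  (fun e => if Nat.eqb e 1 then fst g 2%nat else avg (fst g 0%nat) (fst g 1%nat),
   fun e => if Nat.eqb e 1 then snd g 2%nat else avg (snd g 0%nat) (snd g 1%nat)).

Definition M_transfer (G1 : mgraph) (v1 : nat) (G2 : mgraph) (v2 : nat) (k : C) : Prop :=
  forall f a, admissible G1 v1 k f -> vertex_value G1 f v1 a ->
    exists g, admissible G2 v2 k g /\ vertex_value G2 g v2 a /\ dsum G2 g v2 = dsum G1 f v1.

Lemma Mfun_transfer G1 v1 G2 v2 k m :
  M_transfer G1 v1 G2 v2 k -> M_transfer G2 v2 G1 v1 k -> Mfun G1 v1 k m -> Mfun G2 v2 k m.
Proof.
  intros T12 T21 [[f [a [Hf [Hv Ha]]]] HU]. split.
  - destruct (T12 f a Hf Hv) as [g [Hg [Hgv _]]]. exists g, a. auto.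
  - intros g b Hg Hgv Hb. destruct (T21 g b Hg Hgv) as [f' [Hf' [Hf'v Hd]]].
    rewrite <- Hd. apply HU; auto.
Qed.

Lemma loop_to_interval_transfer L k : M_transfer (loop_graph L) 0 (interval_graph L) 0 k.
Proof.
  intros f a Hf Hv.
  destruct (proj1 (loop_admissible_iff L k f a) (conj Hf Hv)) as [S [E0 EL]].
  destruct (symmetrize_loop_solution _ L _ _ a S E0 EL) as [S' [W0 [DW DD]]].
  exists (loop_to_interval L f).
  assert (H : admissible (interval_graph L) 0 k (loop_to_interval L f) /\
              vertex_value (interval_graph L) (loop_to_interval L f) 0 a)
    by (apply interval_admissible_iff; cbn; auto 7).
  split; [|split]; try apply H.
  rewrite interval_dsum, loop_dsum. cbn. exact DD.
Qed.

Lemma interval_to_loop_transfer L k : M_transfer (interval_graph L) 0 (loop_graph L) 0 k.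
Proof.
  intros g a Hg Hv.
  destruct (proj1 (interval_admissible_iff L k g a) (conj Hg Hv))
    as [S0 [S1 [E0 [E1 [D0 D1]]]]].
  destruct (average_half_solutions _ L _ _ _ _ a S0 S1 E0 E1 D0 D1) as [S [U0 [UL UD]]].
  exists (interval_to_loop g).
  assert (H : admissible (loop_graph L) 0 k (interval_to_loop g) /\
              vertex_value (loop_graph L) (interval_to_loop g) 0 a)
    by (apply loop_admissible_iff; cbn; auto).
  split; [|split]; try apply H.
  rewrite interval_dsum, loop_dsum. cbn. exact UD.
Qed.

Lemma M_functions_coincide L k m :
  Mfun (loop_graph L) 0 k m <-> Mfun (interval_graph L) 0 k m.
Proof.
  split; apply Mfun_transfer;
    auto using loop_to_interval_transfer, interval_to_loop_transfer.
Qed.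

Lemma loop_pendant_to_interval_pendant L c z f a :
  eigen_sol (attach (loop_graph L) 0 c) z f ->
  vertex_value (attach (loop_graph L) 0 c) f 0 a ->
  eigen_sol (attach (interval_graph L) 0 c) z (loop_to_interval L f) /\
  vertex_value (attach (interval_graph L) 0 c) (loop_to_interval L f) 0 a.
Proof.
  intros He Hv.
  destruct (proj1 (loop_pendant_eigen_iff _ _ _ _) He) as [S0 [S1 [_ [_ [D1 DK]]]]].
  destruct (proj1 (loop_pendant_value_iff _ _ _ _) Hv) as [V0 [VL P0]].
  destruct (symmetrize_loop_solution _ L _ _ a S0 V0 VL) as [S' [W0 [DW DD]]].
  split.
  - apply interval_pendant_eigen_iff. cbn.
    refine (conj S' (conj S' (conj S1 (conj _ (conj _ (conj DW (conj DW (conj D1 _))))))));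
      [congruence | congruence | rewrite DD; exact DK].
  - apply interval_pendant_value_iff. cbn. auto.
Qed.

Lemma interval_pendant_to_loop_pendant L c z g a :
  eigen_sol (attach (interval_graph L) 0 c) z g ->
  vertex_value (attach (interval_graph L) 0 c) g 0 a ->
  eigen_sol (attach (loop_graph L) 0 c) z (interval_to_loop g) /\
  vertex_value (attach (loop_graph L) 0 c) (interval_to_loop g) 0 a.
Proof.
  intros He Hv.
  destruct (proj1 (interval_pendant_eigen_iff _ _ _ _) He)
    as [S0 [S1 [S2 [_ [_ [D0 [D1 [D2 DK]]]]]]]].
  destruct (proj1 (interval_pendant_value_iff _ _ _ _) Hv) as [V0 [V1 P0]].
  destruct (average_half_solutions _ L _ _ _ _ a S0 S1 V0 V1 D0 D1) as [S [U0 [UL UD]]].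
  split.
  - apply loop_pendant_eigen_iff. cbn.
    refine (conj S (conj S2 (conj _ (conj _ (conj D2 _)))));
      [congruence | congruence | rewrite UD; exact DK].
  - apply loop_pendant_value_iff. cbn. auto.
Qed.

Lemma nonvanishing_eigenfreqs_coincide L c k :
  eigenfreq_nonvanishing_at (attach (loop_graph L) 0 c) k 0
  <-> eigenfreq_nonvanishing_at (attach (interval_graph L) 0 c) k 0.
Proof.
  split.
  - intros [f [a [He [Hv Ha]]]]. exists (loop_to_interval L f), a.
    destruct (loop_pendant_to_interval_pendant L c _ f a He Hv). auto.
  - intros [g [a [He [Hv Ha]]]]. exists (interval_to_loop g), a.
    destruct (interval_pendant_to_loop_pendant L c _ g a He Hv). auto.
Qed.

(** * The loop and the interval are not isospectral *)

(* k = pi/L is an eigenfrequency of the interval: the odd function sin (k x),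
   read on both halves from the midpoint, satisfies all vertex conditions. *)
Lemma interval_eigenvalue L : 0 < L -> mult_ge (interval_graph L) ((PI / L) * (PI / L)) 1.
Proof.
  intros HL. set (k := PI / L).
  assert (kL : k * (L / 2 - 0) = PI / 2) by (unfold k; field; lra).
  set (f := (fun e : nat => if Nat.eqb e 0 then cs k 0 (RtoC 0) (RtoC 1)
                            else cs k 0 (RtoC 0) (RtoC (-1)),
             fun e : nat => if Nat.eqb e 0 then dcs k 0 (RtoC 0) (RtoC 1)
                            else dcs k 0 (RtoC 0) (RtoC (-1))) : gfun).
  exists (f :: nil). split; [reflexivity | split].
  - constructor; [|constructor].
    rewrite RtoC_mult. apply (eigen_sol_iff_admissible _ 0); [simpl; lia|].
    assert (H : admissible (interval_graph L) 0 (RtoC k) f /\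
                vertex_value (interval_graph L) f 0 (RtoC 0)).
    { apply interval_admissible_iff. rewrite <- RtoC_mult. cbn.
      rewrite !cs_eval, !dcs_eval, kL, Rminus_0_r, Rmult_0_r, cos_0, sin_0, cos_PI2.
      refine (conj (sol_cs _ _ _ _) (conj (sol_cs _ _ _ _) _)). repeat split; C_ext; ring. }
    split; [apply H|]. rewrite interval_dsum. cbn.
    rewrite !dcs_eval, Rminus_0_r, Rmult_0_r, cos_0, sin_0. C_ext; ring.
  - intros cs0 Hl H. destruct cs0 as [|c [|]]; simpl in Hl; try lia.
    pose proof (H 0%nat ltac:(simpl; lia) (L / 2) ltac:(simpl; lra)) as H1.
    simpl in H1. rewrite cs_eval, kL, cos_PI2, sin_PI2 in H1.
    constructor; [|constructor]. destruct c as [p q]. simpl in H1.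
    injection H1; intros. C_ext; lra.
Qed.

(* On the loop, a solution A cos (k x) + B sin (k x) with k = pi/L is
   continuous at v only if A = 0, and Kirchhoff at v then forces B = 0. *)
Lemma loop_not_eigenvalue L : 0 < L -> ~ mult_ge (loop_graph L) ((PI / L) * (PI / L)) 1.
Proof.
  intros HL. set (k := PI / L).
  assert (kp : 0 < k) by (unfold k; apply Rdiv_lt_0_compat; [apply PI_RGT_0 | lra]).
  assert (kL : k * (L - 0) = PI) by (unfold k; field; lra).
  intros [fs [Hl [Hall Hind]]]. destruct fs as [|f [|]]; simpl in Hl; try lia.
  inversion Hall as [|? ? He]; subst.
  rewrite RtoC_mult in He.
  destruct (proj1 (eigen_sol_iff_admissible (loop_graph L) 0 _ _ ltac:(simpl; lia)) He) as [Ha Hd].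
  destruct (proj1 (proj2 Ha) 0%nat ltac:(simpl; lia)) as [a Hv].
  destruct (proj1 (loop_admissible_iff L _ f a) (conj Ha Hv)) as [S [V0 VL]].
  rewrite <- RtoC_mult in S. rewrite loop_dsum in Hd.
  pose proof (sol_repr k 0 _ _ ltac:(lra) S) as Rep.
  set (A := fst f 0%nat 0) in *. set (B := Cmult (snd f 0%nat 0) (RtoC (/ k))) in *.
  destruct (Rep L) as [RL RdL]. destruct (Rep 0) as [_ Rd0].
  rewrite cs_eval, kL, cos_PI, sin_PI in RL.
  rewrite dcs_eval, kL, cos_PI, sin_PI in RdL.
  rewrite dcs_eval, Rminus_0_r, Rmult_0_r, cos_0, sin_0 in Rd0.
  assert (HA : A = RtoC 0).
  { assert (HAL : A = fst f 0%nat L) by (rewrite VL; exact V0).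
    rewrite RL in HAL. destruct A as [p q]. simpl in HAL. injection HAL; intros.
    C_ext; lra. }
  assert (HB : B = RtoC 0).
  { rewrite RdL, Rd0 in Hd. destruct A as [p q], B as [r s]. simpl in Hd.
    injection Hd; intros. C_ext; nra. }
  assert (Z : forall x, fst f 0%nat x = RtoC 0).
  { intros x. rewrite (proj1 (Rep x)). fold A B. rewrite HA, HB. unfold cs. ring. }
  specialize (Hind (RtoC 1 :: nil) eq_refl).
  assert (H1 : List.Forall (fun c => c = RtoC 0) (RtoC 1 :: nil)).
  { apply Hind. intros e He' x _. finite_cases e He'. simpl. rewrite Z. ring. }
  inversion H1 as [|? ? Hc]. injection Hc; intros; lra.
Qed.

Lemma loop_interval_not_isospectral L : 0 < L -> ~ isospectral (loop_graph L) (interval_graph L).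
Proof.
  intros HL HI. apply (loop_not_eigenvalue L HL), (proj2 (HI _ 1%nat)), interval_eigenvalue, HL.
Qed.

(** * The secular equations for L = 4 *)

(* F_c(k) is, up to the unit 4 i e^{i(c+2)k}, the real function below; the
   prefactors -1 + e^{4ik} and 1 + e^{4ik} are, up to units, sin 2k and cos 2k. *)
Definition secular_factor (c k : R) : R :=
  2 * cos (c * k) * sin (2 * k) + cos (2 * k) * sin (c * k).

Lemma cexpi_mul x y : Cmult (cexpi x) (cexpi y) = cexpi (x + y).
Proof. unfold cexpi. rewrite cos_plus, sin_plus. C_ext; ring. Qed.

Lemma cexpi_mult_eq_0 t r1 r2 : Cmult (cexpi t) (r1, r2) = RtoC 0 <-> r1 = 0 /\ r2 = 0.
Proof.
  unfold cexpi. pose proof (sin2_cos2 t) as P. unfold Rsqr in P. split.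
  - intros H. injection H; intros H1 H2. simpl in H1, H2.
    split; [ transitivity (cos t * (cos t * r1 - sin t * r2) + sin t * (cos t * r2 + sin t * r1))
           | transitivity (cos t * (cos t * r2 + sin t * r1) - sin t * (cos t * r1 - sin t * r2)) ];
      try (rewrite H1, H2; ring);
      [ transitivity (r1 * (sin t * sin t + cos t * cos t))
      | transitivity (r2 * (sin t * sin t + cos t * cos t)) ]; [rewrite P| |rewrite P|]; ring.
  - intros [-> ->]. C_ext; ring.
Qed.

(* Collects the consequences of sin^2 + cos^2 = 1 for two angles, as needed to
   check polynomial identities in sin a, cos a, sin b, cos b with lra. *)
Ltac pythagoras a b :=
  let Ha := fresh in let Hb := fresh in
  pose proof (sin2_cos2 a) as Ha; pose proof (sin2_cos2 b) as Hb; unfold Rsqr in Ha, Hb;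
  let Ea := fresh in let Eb := fresh in
  assert (Ea : sin a * sin a + cos a * cos a - 1 = 0) by lra;
  assert (Eb : sin b * sin b + cos b * cos b - 1 = 0) by lra;
  let go E m := (let h := fresh in pose proof (f_equal (fun t => t * m) E) as h; simpl in h) in
  go Ea (cos b * cos b); go Ea (sin b * sin b); go Ea (sin b * cos b); go Ea (cos a * cos b);
  go Ea (sin a * sin b); go Ea (cos a * sin b); go Ea (sin a * cos b);
  go Eb (cos a * cos a); go Eb (sin a * sin a); go Eb (sin a * cos a); go Eb (cos a * cos b);
  go Eb (sin a * sin b); go Eb (cos a * sin b); go Eb (sin a * cos b);
  go Ea (sin b * sin b + cos b * cos b - 1).

Lemma Fc_factor c k :
  Fc c k = Cmult (cexpi (c * k + 2 * k)) ((0 : R), 4 * secular_factor c k).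
Proof.
  unfold Fc, cexpi, secular_factor.
  replace (2 * c * k) with (2 * (c * k)) by ring.
  replace (2 * (c + 2) * k) with (2 * (c * k) + 2 * (2 * k)) by ring.
  replace (4 * k) with (2 * (2 * k)) by ring.
  set (a := c * k). set (b := 2 * k).
  rewrite ?cos_plus, ?sin_plus, ?cos_2a, ?sin_2a.
  pythagoras a b. C_ext; lra.
Qed.

Lemma loop_prefactor k :
  Cplus (RtoC (-1)) (cexpi (4 * k)) = Cmult (cexpi (2 * k)) ((0 : R), 2 * sin (2 * k)).
Proof.
  unfold cexpi. replace (4 * k) with (2 * (2 * k)) by ring.
  rewrite (cos_2a (2 * k)), (sin_2a (2 * k)). pose proof (sin2_cos2 (2 * k)). unfold Rsqr in *.
  C_ext; lra.
Qed.

Lemma interval_prefactor k :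
  Cplus (RtoC 1) (cexpi (4 * k)) = Cmult (cexpi (2 * k)) (2 * cos (2 * k), (0 : R)).
Proof.
  unfold cexpi. replace (4 * k) with (2 * (2 * k)) by ring.
  rewrite (cos_2a (2 * k)), (sin_2a (2 * k)). pose proof (sin2_cos2 (2 * k)). unfold Rsqr in *.
  C_ext; lra.
Qed.

Lemma loop_secular_iff c k :
  Cmult (Cplus (RtoC (-1)) (cexpi (4 * k))) (Fc c k) = RtoC 0 <->
  sin (2 * k) * secular_factor c k = 0.
Proof.
  rewrite loop_prefactor, Fc_factor.
  replace (Cmult (Cmult (cexpi (2 * k)) ((0 : R), 2 * sin (2 * k)))
                 (Cmult (cexpi (c * k + 2 * k)) ((0 : R), 4 * secular_factor c k)))
    with (Cmult (Cmult (cexpi (2 * k)) (cexpi (c * k + 2 * k)))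
                (- (8 * sin (2 * k) * secular_factor c k), (0 : R)))
    by (destruct (cexpi (2 * k)), (cexpi (c * k + 2 * k)); C_ext; ring).
  rewrite cexpi_mul, cexpi_mult_eq_0. lra.
Qed.

Lemma interval_secular_iff c k :
  Cmult (Cplus (RtoC 1) (cexpi (4 * k))) (Fc c k) = RtoC 0 <->
  cos (2 * k) * secular_factor c k = 0.
Proof.
  rewrite interval_prefactor, Fc_factor.
  replace (Cmult (Cmult (cexpi (2 * k)) (2 * cos (2 * k), (0 : R)))
                 (Cmult (cexpi (c * k + 2 * k)) ((0 : R), 4 * secular_factor c k)))
    with (Cmult (Cmult (cexpi (2 * k)) (cexpi (c * k + 2 * k)))
                ((0 : R), 8 * cos (2 * k) * secular_factor c k))
    by (destruct (cexpi (2 * k)), (cexpi (c * k + 2 * k)); C_ext; ring).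
  rewrite cexpi_mul, cexpi_mult_eq_0. lra.
Qed.

Lemma zero_eigenfreq G : (0 < nE G)%nat -> 0 <= elen G 0 -> eigenfreq G 0.
Proof.
  intros HE Hl. exists (fun _ _ => RtoC 1, fun _ _ => RtoC 0). split; [split|].
  - intros e _ x. simpl. split.
    + apply (is_derive_RtoC (fun _ => 1)). auto_derive; auto.
    + eapply is_derive_eq_val; [apply (is_derive_RtoC (fun _ => 0)); auto_derive; auto|].
      C_ext; ring.
  - intros w _. split; [exists (RtoC 1); intros e _; simpl; auto|].
    unfold dsum. simpl. induction (seq 0 (nE G)) as [|e l IH]; [reflexivity|].
    simpl. rewrite IH. destruct (Nat.eqb (esrc G e) w), (Nat.eqb (etgt G e) w); C_ext; ring.
  - intros Hz. specialize (Hz 0%nat HE 0 (conj (Rle_refl 0) Hl)). simpl in Hz.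
    injection Hz. lra.
Qed.

(** Writing C2 = cos 2k, S2 = sin 2k,
    Cc = cos ck, Sc = sin ck, an eigenfunction is A cos kx + B sin kx on the
    loop and al cos k(x - c) on the pendant edge, and the vertex conditions
    are a real linear system in (A, B, al) of determinant ~ S2 * secular_factor. *)

(* One real component of the vertex conditions: continuity at both ends of the
   loop and the Kirchhoff condition. *)
Lemma loop_pendant_system k C2 S2 Cc Sc A B al :
  k <> 0 -> C2 * C2 + S2 * S2 = 1 -> S2 <> 0 -> 2 * Cc * S2 + C2 * Sc <> 0 ->
  A = al * Cc -> A * (C2 * C2 - S2 * S2) + B * (2 * S2 * C2) = al * Cc ->
  k * (B - (- A * (2 * S2 * C2) + B * (C2 * C2 - S2 * S2)) + al * Sc) = 0 ->
  A = 0 /\ B = 0 /\ al = 0.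
Proof.
  intros Hk P HS HY E0 EL DK.
  assert (HB : C2 * B - S2 * A = 0).
  { apply (Rmult_eq_reg_l (2 * S2)); [|lra].
    transitivity ((A * (C2 * C2 - S2 * S2) + B * (2 * S2 * C2)) - A * (C2 * C2 + S2 * S2));
      [ring | rewrite EL, P, <- E0; ring]. }
  assert (Hflux : B * (1 - (C2 * C2 - S2 * S2)) + A * (2 * S2 * C2) + al * Sc = 0).
  { apply (Rmult_eq_reg_l k); [|auto]. rewrite Rmult_0_r, <- DK. ring. }
  assert (H2B : 2 * B + al * Sc = 0).
  { apply (Rmult_eq_reg_l S2); [|auto].
    transitivity (S2 * (B * (1 - (C2 * C2 - S2 * S2)) + A * (2 * S2 * C2) + al * Sc)
                  + S2 * B * (1 - (C2 * C2 + S2 * S2)) + 2 * S2 * C2 * (C2 * B - S2 * A));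
      [ring | rewrite Hflux, P, HB; ring]. }
  assert (Hal : al = 0).
  { apply (Rmult_eq_reg_r (2 * Cc * S2 + C2 * Sc)); [|auto].
    transitivity (2 * S2 * (al * Cc - A) + C2 * (2 * B + al * Sc) - 2 * (C2 * B - S2 * A));
      [ring | rewrite H2B, HB, <- E0; ring]. }
  subst al. split; [|split]; [rewrite E0; ring | lra | reflexivity].
Qed.

Lemma loop_pendant_only_trivial c k f :
  k <> 0 -> sin (2 * k) <> 0 -> secular_factor c k <> 0 ->
  eigen_sol (attach (loop_graph 4) 0 c) (RtoC (k * k)) f -> gzero (attach (loop_graph 4) 0 c) f.
Proof.
  intros Hk HS HY He.
  destruct (proj1 (loop_pendant_eigen_iff _ _ _ _) He) as [S0 [S1 [E0 [EL [D1 DK]]]]].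
  pose proof (sol_repr k 0 _ _ Hk S0) as R0.
  pose proof (sol_repr_neumann k c _ _ Hk S1 D1) as R1.
  set (A := fst f 0%nat 0) in *. set (B := Cmult (snd f 0%nat 0) (RtoC (/ k))) in *.
  set (al := fst f 1%nat c) in *.
  rewrite (proj1 (R1 0)) in E0. rewrite (proj1 (R0 4)), (proj1 (R1 0)) in EL.
  rewrite (proj2 (R0 0)), (proj2 (R0 4)), (proj2 (R1 0)) in DK.
  rewrite cs_eval in E0. rewrite !cs_eval in EL. rewrite !dcs_eval in DK.
  assert (a4 : k * (4 - 0) = 2 * (2 * k)) by ring.
  assert (ac : k * (0 - c) = - (c * k)) by ring.
  assert (a0 : k * (0 - 0) = 0) by ring.
  rewrite ac, cos_neg, sin_neg in E0.
  rewrite a4, ac, cos_neg, sin_neg, (cos_2a (2 * k)), (sin_2a (2 * k)) in EL.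
  rewrite a4, ac, a0, cos_neg, sin_neg, (cos_2a (2 * k)), (sin_2a (2 * k)), sin_0, cos_0 in DK.
  pose proof (sin2_cos2 (2 * k)) as P. unfold Rsqr in P.
  assert (Y : 2 * cos (c * k) * sin (2 * k) + cos (2 * k) * sin (c * k) <> 0) by exact HY.
  (* The real and imaginary parts of (A, B, al) both solve the real system. *)
  destruct A as [ar ai], B as [br bi], al as [lr li]. simpl in E0, EL, DK.
  injection E0; intros E0i E0r. injection EL; intros ELi ELr. injection DK; intros DKi DKr.
  destruct (loop_pendant_system k (cos (2 * k)) (sin (2 * k)) (cos (c * k)) (sin (c * k))
              ar br lr Hk ltac:(lra) HS Y ltac:(lra) ltac:(lra) ltac:(rewrite <- DKr; ring))
    as [-> [-> ->]].
  destruct (loop_pendant_system k (cos (2 * k)) (sin (2 * k)) (cos (c * k)) (sin (c * k))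
              ai bi li Hk ltac:(lra) HS Y ltac:(lra) ltac:(lra) ltac:(rewrite <- DKi; ring))
    as [-> [-> ->]].
  intros e He' x _. finite_cases e He'; simpl.
  - rewrite (proj1 (R0 x)). unfold cs. C_ext; ring.
  - rewrite (proj1 (R1 x)). unfold cs. C_ext; ring.
Qed.

(* If sin 2k = 0 with k <> 0 then |k| >= pi/2, so sin (k x) <> 0 at x = pi/(2|k|) <= 4. *)
Lemma sin_nonzero_in_0_4 k : k <> 0 -> sin (2 * k) = 0 ->
  exists x, 0 <= x <= 4 /\ sin (k * x) <> 0.
Proof.
  intros Hk HS. destruct (sin_eq_0_0 _ HS) as [n Hn]. pose proof PI_RGT_0.
  assert (Hpos : 0 < Rabs k) by (apply Rabs_pos_lt; auto).
  assert (Hn1 : 1 <= Rabs (IZR n)).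
  { rewrite Rabs_Zabs. apply IZR_le.
    assert (n <> 0%Z) by (intros ->; apply Hk; lra). lia. }
  assert (Hka : PI <= 2 * Rabs k).
  { replace (2 * Rabs k) with (Rabs (2 * k)) by (rewrite Rabs_mult, Rabs_pos_eq; lra).
    rewrite Hn, Rabs_mult, (Rabs_pos_eq PI) by lra. nra. }
  exists (PI / (2 * Rabs k)). split.
  - split; [apply Rlt_le, Rdiv_lt_0_compat; lra|].
    apply (Rmult_le_reg_r (2 * Rabs k)); [lra|].
    unfold Rdiv. rewrite Rmult_assoc, Rinv_l by lra. nra.
  - destruct (Rcase_abs k) as [Hneg | Hnneg].
    + rewrite Rabs_left by auto. replace (k * (PI / (2 * - k))) with (- (PI / 2)) by (field; lra).
      rewrite sin_neg, sin_PI2. lra.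
    + rewrite Rabs_pos_eq by lra. replace (k * (PI / (2 * k))) with (PI / 2) by (field; lra).
      rewrite sin_PI2. lra.
Qed.

Lemma loop_pendant_sin_mode c k : k <> 0 -> sin (2 * k) = 0 ->
  eigenfreq (attach (loop_graph 4) 0 c) k.
Proof.
  intros Hk HS.
  exists (fun e => if Nat.eqb e 0 then cs k 0 (RtoC 0) (RtoC 1) else cs k c (RtoC 0) (RtoC 0),
          fun e => if Nat.eqb e 0 then dcs k 0 (RtoC 0) (RtoC 1) else dcs k c (RtoC 0) (RtoC 0)).
  split.
  - apply loop_pendant_eigen_iff. cbn.
    refine (conj (sol_cs _ _ _ _) (conj (sol_cs _ _ _ _) _)).
    rewrite !cs_eval, !dcs_eval, !Rminus_eq_0, !Rmult_0_r.
    replace (k * (4 - 0)) with (2 * (2 * k)) by ring.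
    rewrite (cos_2a (2 * k)), (sin_2a (2 * k)), HS, sin_0, cos_0.
    pose proof (sin2_cos2 (2 * k)) as P. unfold Rsqr in P. rewrite HS in P.
    repeat split; C_ext; try ring.
    transitivity (k * (1 - cos (2 * k) * cos (2 * k))); [ring | rewrite <- P; ring].
  - intros Hz. destruct (sin_nonzero_in_0_4 k Hk HS) as [x [Hx Hsx]].
    specialize (Hz 0%nat ltac:(simpl; lia) x ltac:(simpl; lra)).
    simpl in Hz. rewrite cs_eval, Rminus_0_r in Hz. injection Hz; intros. apply Hsx. lra.
Qed.

Lemma loop_pendant_secular_mode c k : 0 < c -> sin (2 * k) <> 0 -> secular_factor c k = 0 ->
  eigenfreq (attach (loop_graph 4) 0 c) k.
Proof.
  intros Hc HS HY. unfold secular_factor in HY.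
  set (C2 := cos (2 * k)) in *. set (S2 := sin (2 * k)) in *.
  set (Cc := cos (c * k)) in *. set (Sc := sin (c * k)) in *.
  exists (fun e => if Nat.eqb e 0 then cs k 0 (RtoC (- Sc * C2)) (RtoC (- Sc * S2))
                   else cs k c (RtoC (2 * S2)) (RtoC 0),
          fun e => if Nat.eqb e 0 then dcs k 0 (RtoC (- Sc * C2)) (RtoC (- Sc * S2))
                   else dcs k c (RtoC (2 * S2)) (RtoC 0)).
  split.
  - apply loop_pendant_eigen_iff. cbn.
    refine (conj (sol_cs _ _ _ _) (conj (sol_cs _ _ _ _) _)).
    rewrite !cs_eval, !dcs_eval, !Rminus_eq_0, !Rmult_0_r.
    replace (k * (4 - 0)) with (2 * (2 * k)) by ring.
    replace (k * (0 - c)) with (- (c * k)) by ring.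
    rewrite cos_neg, sin_neg, (cos_2a (2 * k)), (sin_2a (2 * k)), sin_0, cos_0.
    fold C2 S2 Cc Sc.
    assert (P : C2 * C2 + S2 * S2 = 1)
      by (pose proof (sin2_cos2 (2 * k)) as Q; unfold Rsqr in Q; fold C2 S2 in Q; lra).
    pose proof (f_equal (fun t => t * (Sc * C2)) P) as P1.
    pose proof (f_equal (fun t => t * (k * Sc * S2)) P) as P2. simpl in P1, P2.
    repeat split; C_ext; try ring; nra.
  - intros Hz. specialize (Hz 1%nat ltac:(simpl; lia) c ltac:(simpl; lra)).
    simpl in Hz. rewrite cs_eval, Rminus_eq_0, Rmult_0_r, cos_0, sin_0 in Hz.
    injection Hz; intros. apply HS. fold S2. lra.
Qed.

Lemma loop_pendant_eigenfreq_iff c k : 0 < c ->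
  eigenfreq (attach (loop_graph 4) 0 c) k <-> sin (2 * k) * secular_factor c k = 0.
Proof.
  intros Hc. destruct (Req_dec k 0) as [-> | Hk].
  - split; intros _; [rewrite Rmult_0_r, sin_0; ring | apply zero_eigenfreq; simpl; [lia | lra]].
  - split.
    + intros [f [He Hnz]]. destruct (Req_dec (sin (2 * k)) 0) as [HS | HS]; [rewrite HS; ring|].
      destruct (Req_dec (secular_factor c k) 0) as [HY | HY]; [rewrite HY; ring|].
      exfalso. exact (Hnz (loop_pendant_only_trivial c k f Hk HS HY He)).
    + intros H. destruct (Req_dec (sin (2 * k)) 0) as [HS | HS].
      * exact (loop_pendant_sin_mode c k Hk HS).
      * apply loop_pendant_secular_mode; auto.
        destruct (Rmult_integral _ _ H); [contradiction | assumption].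
Qed.

(** An eigenfunction
    is b0 cos k(x - 2), b1 cos k(x - 2) on the two halves (Neumann at their
    ends) and al cos k(x - c) on the pendant edge; the determinant of the
    vertex conditions is ~ C2 * secular_factor. *)

(* One real component of the vertex conditions. *)
Lemma interval_pendant_system k C2 S2 Cc Sc b0 b1 al :
  k <> 0 -> C2 <> 0 -> 2 * Cc * S2 + C2 * Sc <> 0 ->
  b0 * C2 = al * Cc -> b1 * C2 = al * Cc ->
  b0 * (- k * - S2) + b1 * (- k * - S2) + al * (- k * - Sc) = 0 ->
  b0 = 0 /\ b1 = 0 /\ al = 0.
Proof.
  intros Hk HC HY E0 E1 DK.
  assert (Hflux : S2 * (b0 + b1) + al * Sc = 0).
  { apply (Rmult_eq_reg_l k); [|auto]. rewrite Rmult_0_r, <- DK. ring. }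
  assert (Hal : al = 0).
  { apply (Rmult_eq_reg_r (2 * Cc * S2 + C2 * Sc)); [|auto].
    transitivity (C2 * (S2 * (b0 + b1) + al * Sc) - S2 * (b0 * C2 - al * Cc)
                  - S2 * (b1 * C2 - al * Cc)); [ring | rewrite Hflux, E0, E1; ring]. }
  subst al. rewrite Rmult_0_l in E0, E1.
  split; [|split; [|reflexivity]]; apply (Rmult_eq_reg_r C2); auto; lra.
Qed.

Lemma interval_pendant_only_trivial c k f :
  k <> 0 -> cos (2 * k) <> 0 -> secular_factor c k <> 0 ->
  eigen_sol (attach (interval_graph 4) 0 c) (RtoC (k * k)) f ->
  gzero (attach (interval_graph 4) 0 c) f.
Proof.
  intros Hk HC HY He.
  destruct (proj1 (interval_pendant_eigen_iff _ _ _ _) He)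
    as [S0 [S1 [S2 [E0 [E1 [D0 [D1 [D2 DK]]]]]]]].
  pose proof (sol_repr_neumann k (4 / 2) _ _ Hk S0 D0) as R0.
  pose proof (sol_repr_neumann k (4 / 2) _ _ Hk S1 D1) as R1.
  pose proof (sol_repr_neumann k c _ _ Hk S2 D2) as R2.
  set (b0 := fst f 0%nat (4 / 2)) in *. set (b1 := fst f 1%nat (4 / 2)) in *.
  set (al := fst f 2%nat c) in *.
  rewrite (proj1 (R0 0)), (proj1 (R2 0)), !cs_eval in E0.
  rewrite (proj1 (R1 0)), (proj1 (R2 0)), !cs_eval in E1.
  rewrite (proj2 (R0 0)), (proj2 (R1 0)), (proj2 (R2 0)), !dcs_eval in DK.
  assert (a2 : k * (0 - 4 / 2) = - (2 * k)) by field.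
  assert (ac : k * (0 - c) = - (c * k)) by ring.
  rewrite a2, ac, !cos_neg, !sin_neg in E0. rewrite a2, ac, !cos_neg, !sin_neg in E1.
  rewrite a2, ac, !sin_neg in DK.
  assert (Y : 2 * cos (c * k) * sin (2 * k) + cos (2 * k) * sin (c * k) <> 0) by exact HY.
  destruct b0 as [b0r b0i], b1 as [b1r b1i], al as [ar ai]. simpl in E0, E1, DK.
  injection E0; intros E0i E0r. injection E1; intros E1i E1r. injection DK; intros DKi DKr.
  destruct (interval_pendant_system k (cos (2 * k)) (sin (2 * k)) (cos (c * k)) (sin (c * k))
              b0r b1r ar Hk HC Y ltac:(lra) ltac:(lra) ltac:(rewrite <- DKr; ring))
    as [-> [-> ->]].
  destruct (interval_pendant_system k (cos (2 * k)) (sin (2 * k)) (cos (c * k)) (sin (c * k))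
              b0i b1i ai Hk HC Y ltac:(lra) ltac:(lra) ltac:(rewrite <- DKi; ring))
    as [-> [-> ->]].
  intros e He' x _. finite_cases e He'; simpl;
    [rewrite (proj1 (R0 x)) | rewrite (proj1 (R1 x)) | rewrite (proj1 (R2 x))];
    unfold cs; C_ext; ring.
Qed.

Lemma interval_pendant_odd_mode c k : cos (2 * k) = 0 ->
  eigenfreq (attach (interval_graph 4) 0 c) k.
Proof.
  intros HC.
  exists (fun e => if Nat.eqb e 0 then cs k (4 / 2) (RtoC 1) (RtoC 0)
                   else if Nat.eqb e 1 then cs k (4 / 2) (RtoC (-1)) (RtoC 0)
                   else cs k c (RtoC 0) (RtoC 0),
          fun e => if Nat.eqb e 0 then dcs k (4 / 2) (RtoC 1) (RtoC 0)
                   else if Nat.eqb e 1 then dcs k (4 / 2) (RtoC (-1)) (RtoC 0)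
                   else dcs k c (RtoC 0) (RtoC 0)).
  split.
  - apply interval_pendant_eigen_iff. cbn.
    refine (conj (sol_cs _ _ _ _) (conj (sol_cs _ _ _ _) (conj (sol_cs _ _ _ _) _))).
    rewrite !cs_eval, !dcs_eval, !Rminus_eq_0, !Rmult_0_r.
    replace (k * (0 - 4 / 2)) with (- (2 * k)) by field.
    rewrite cos_neg, sin_neg, sin_0, cos_0, HC.
    repeat split; C_ext; ring.
  - intros Hz. specialize (Hz 0%nat ltac:(simpl; lia) (4 / 2) ltac:(simpl; lra)).
    simpl in Hz. rewrite cs_eval, Rminus_eq_0, Rmult_0_r, cos_0, sin_0 in Hz.
    injection Hz; intros; lra.
Qed.

Lemma interval_pendant_secular_mode c k : 0 < c -> cos (2 * k) <> 0 -> secular_factor c k = 0 ->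
  eigenfreq (attach (interval_graph 4) 0 c) k.
Proof.
  intros Hc HC HY. unfold secular_factor in HY.
  exists (fun e => if Nat.eqb e 2 then cs k c (RtoC (cos (2 * k))) (RtoC 0)
                   else cs k (4 / 2) (RtoC (cos (c * k))) (RtoC 0),
          fun e => if Nat.eqb e 2 then dcs k c (RtoC (cos (2 * k))) (RtoC 0)
                   else dcs k (4 / 2) (RtoC (cos (c * k))) (RtoC 0)).
  split.
  - apply interval_pendant_eigen_iff. cbn.
    refine (conj (sol_cs _ _ _ _) (conj (sol_cs _ _ _ _) (conj (sol_cs _ _ _ _) _))).
    rewrite !cs_eval, !dcs_eval, !Rminus_eq_0, !Rmult_0_r.
    replace (k * (0 - 4 / 2)) with (- (2 * k)) by field.
    replace (k * (0 - c)) with (- (c * k)) by ring.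
    rewrite !cos_neg, !sin_neg, sin_0, cos_0.
    repeat split; C_ext; try ring.
    transitivity (k * (2 * cos (c * k) * sin (2 * k) + cos (2 * k) * sin (c * k)));
      [ring | rewrite HY; ring].
  - intros Hz. specialize (Hz 2%nat ltac:(simpl; lia) c ltac:(simpl; lra)).
    simpl in Hz. rewrite cs_eval, Rminus_eq_0, Rmult_0_r, cos_0, sin_0 in Hz.
    injection Hz; intros; apply HC; lra.
Qed.

Lemma interval_pendant_eigenfreq_iff c k : 0 < c ->
  eigenfreq (attach (interval_graph 4) 0 c) k <-> cos (2 * k) * secular_factor c k = 0.
Proof.
  intros Hc. destruct (Req_dec k 0) as [-> | Hk].
  - split; intros _; [unfold secular_factor; rewrite !Rmult_0_r, sin_0; ring|].
    apply zero_eigenfreq; simpl; [lia | lra].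
  - split.
    + intros [f [He Hnz]]. destruct (Req_dec (cos (2 * k)) 0) as [HC | HC]; [rewrite HC; ring|].
      destruct (Req_dec (secular_factor c k) 0) as [HY | HY]; [rewrite HY; ring|].
      exfalso. exact (Hnz (interval_pendant_only_trivial c k f Hk HC HY He)).
    + intros H. destruct (Req_dec (cos (2 * k)) 0) as [HC | HC].
      * exact (interval_pendant_odd_mode c k HC).
      * apply interval_pendant_secular_mode; auto.
        destruct (Rmult_integral _ _ H); [contradiction | assumption].
Qed.

Theorem mainTheorem8 (L : R) (HL : (0 < L)%R) :
  (forall k m : C, Mfun (loop_graph L) 0 k m <-> Mfun (interval_graph L) 0 k m)
  /\ ~ isospectral (loop_graph L) (interval_graph L)
  /\ (forall c : R, (0 < c)%R -> forall k : R,
        eigenfreq_nonvanishing_at (attach (loop_graph L) 0 c) k 0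
        <-> eigenfreq_nonvanishing_at (attach (interval_graph L) 0 c) k 0)
  /\ (forall c : R, (0 < c)%R -> forall k : R,
        (eigenfreq (attach (loop_graph 4) 0 c) k
           <-> Cmult (Cplus (RtoC (-1)) (cexpi (4 * k))) (Fc c k) = RtoC 0)
        /\ (eigenfreq (attach (interval_graph 4) 0 c) k
           <-> Cmult (Cplus (RtoC 1) (cexpi (4 * k))) (Fc c k) = RtoC 0)).
Proof.
  split; [exact (M_functions_coincide L)|].
  split; [exact (loop_interval_not_isospectral L HL)|].
  split; [intros c _ k; exact (nonvanishing_eigenfreqs_coincide L c k)|].
  intros c Hc k. split.
  - rewrite loop_secular_iff. exact (loop_pendant_eigenfreq_iff c k Hc).
  - rewrite interval_secular_iff. exact (interval_pendant_eigenfreq_iff c k Hc).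
Qed.
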